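(* (i) The set of double cones of Minkowski spacetime, with the Poincaré group as symmetry group, has a covariant path-frame system. (ii) The set of nonempty open connected intervals of $S^1$ having closure different from $S^1$, with the Möbius group as symmetry group, does not have a covariant path-frame system.
   Context: Both sets are ordered by inclusion and are causal posets. Double cones: sets $s(o_R)$ with $R>0$, $o_R=\{(t,\mathbf x):|t|+|\mathbf x|<R\}$ and $s$ a proper orthochronous Poincaré transformation; $o_1\perp o_2$ iff all points of $o_1$ are spacelike separated from all points of $o_2$. For intervals of $S^1$, $\perp$ is disjointness. The symmetry group $S$ acts by $o\mapsto s(o)$; $S_a$ denotes the stabilizer of $a$. A 1-simplex is $b=(|b|;\partial_0b,\partial_1b)$ with $\partial_0b,\partial_1b\subseteq|b|$, opposite $\overline b=(|b|;\partial_1b,\partial_0b)$, $s(b)=(s(|b|);s(\partial_0b),s(\partial_1b))$. $\mathrm T_1(K)$: 1-simplices with $\partial_0b\ne|b|\ne\partial_1b$. $\mathrm F(K)$: group generated by $\mathrm T_1(K)$ with $b^{-1}=\overline b$, with $S$ acting letterwise. A path from $a$ to $o$ is a word $b_n\cdots b_1$, $b_i\in\mathrm T_1(K)$ (empty if $a=o$ allowed), with $\partial_1b_1=a$, $\partial_0b_n=o$, $\partial_0b_i=\partial_1b_{i+1}$. A path-frame $P_o$ over $o$ is a choice of a path $p_{(o,a)}$ from $o$ to $a$ for each $a\in K$ with $p_{(o,o)}=1$. A covariant path-frame system is a family $\{P_o:o\in K\}$ with $s(p_{(a,x)})=p_{(s(a),s(x))}$ for all $a,x\in K$, $s\in S$.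 *)

From mathcomp Require Import all_boot all_order all_algebra.
From mathcomp Require Import all_classical all_reals.
From mathcomp Require Import complex trigo.
From Stdlib Require Import Relations.
Import GRing.Theory Num.Theory.

Set Implicit Arguments.
Unset Strict Implicit.
Unset Printing Implicit Defensive.

Local Open Scope classical_set_scope.
Local Open Scope ring_scope.

Record simplex1 (X : Type) := Simplex1 {
  supp : set X;
  bd0  : set X;
  bd1  : set X
}.

Definition opp_simplex (X : Type) (b : simplex1 X) : simplex1 X :=
  Simplex1 (supp b) (bd1 b) (bd0 b).

Definition act_simplex (X : Type) (s : X -> X) (b : simplex1 X) : simplex1 X :=
  Simplex1 (s @` supp b) (s @` bd0 b) (s @` bd1 b).

Definition is_simplex1 (X : Type) (K : set (set X)) (b : simplex1 X) : Prop :=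
  [/\ K (supp b), K (bd0 b), K (bd1 b), bd0 b `<=` supp b & bd1 b `<=` supp b].

Definition T1 (X : Type) (K : set (set X)) (b : simplex1 X) : Prop :=
  [/\ is_simplex1 K b, bd0 b <> supp b & bd1 b <> supp b].

(* Words over T_1(K); the group F(K) generated by T_1(K) with b^{-1} = \bar b
   is the quotient of words by cancellation of adjacent pairs b \bar b. *)
Inductive fg_step (X : Type) (K : set (set X)) :
    seq (simplex1 X) -> seq (simplex1 X) -> Prop :=
| fg_cancel (l1 l2 : seq (simplex1 X)) (b : simplex1 X) :
    T1 K b -> fg_step K (l1 ++ b :: opp_simplex b :: l2) (l1 ++ l2).

Definition fg_eq (X : Type) (K : set (set X)) : relation (seq (simplex1 X)) :=
  clos_refl_sym_trans _ (fg_step K).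

(* [is_path K a o w]: the list w = [:: b_1; ...; b_n] represents the word
   b_n ... b_1, which is a path from a to o: b_i \in T_1(K),
   d1 b_1 = a, d0 b_n = o, d0 b_i = d1 b_(i+1); empty only if a = o. *)
Fixpoint is_path (X : Type) (K : set (set X)) (a o : set X)
    (w : seq (simplex1 X)) : Prop :=
  match w with
  | [::] => a = o
  | b :: w' => [/\ T1 K b, bd1 b = a & is_path K (bd0 b) o w']
  end.

Definition has_covariant_path_frame_system (X : Type) (K : set (set X))
    (S : set (X -> X)) : Prop :=
  exists p : set X -> set X -> seq (simplex1 X),
    [/\ (forall o a, K o -> K a -> is_path K o a (p o a)),
        (forall o, K o -> fg_eq K (p o o) [::]) &
        (forall s a x, S s -> K a -> K x ->
           fg_eq K (map (act_simplex s) (p a x)) (p (s @` a) (s @` x)))].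

(* Minkowski spacetime R^{1+3}; points are column vectors, index 0 = time.   *)

Definition spatial_norm (R : realType) (x : 'cV[R]_4) : R :=
  Num.sqrt (\sum_(i < 3) x (lift ord0 i) ord0 ^+ 2).

Definition std_double_cone (R : realType) (r : R) : set 'cV[R]_4 :=
  [set x : 'cV[R]_4 | `|x ord0 ord0| + spatial_norm x < r].

Definition minkowski_metric (R : realType) : 'M[R]_4 :=
  diag_mx (\row_(i < 4) (if i == ord0 then 1 else -1)).

Definition proper_ortho_lorentz (R : realType) (L : 'M[R]_4) : Prop :=
  [/\ L^T *m minkowski_metric R *m L = minkowski_metric R,
      \det L = 1 & 0 < L ord0 ord0].

Definition poincare (R : realType) : set ('cV[R]_4 -> 'cV[R]_4) :=
  [set s | exists (L : 'M[R]_4) (a : 'cV[R]_4),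
     proper_ortho_lorentz L /\ forall x, s x = L *m x + a].

Definition double_cones (R : realType) : set (set 'cV[R]_4) :=
  [set A | exists (s : 'cV[R]_4 -> 'cV[R]_4) (r : R),
     [/\ poincare s, 0 < r & A = s @` std_double_cone r]].

(* The circle S^1 = {z \in C : |z| = 1} and the Moebius group PSU(1,1)       *)
(* (~ PSL(2,R)) acting by z |-> (a z + b) / (conj b z + conj a).             *)

Definition expi (R : realType) (t : R) : R[i] := Complex (cos t) (sin t).

Definition arc (R : realType) (alpha beta : R) : set R[i] :=
  [set z | exists t, alpha < t < beta /\ z = expi t].

(* nonempty open connected intervals of S^1 with closure <> S^1:
   exactly the open arcs of length in (0, 2 pi). *)
Definition circle_intervals (R : realType) : set (set R[i]) :=
  [set I | exists alpha beta : R,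
     alpha < beta < alpha + 2 * pi /\ I = arc alpha beta].

Definition mobius (R : realType) : set (R[i] -> R[i]) :=
  [set s | exists a b : R[i],
     a * a^* - b * b^* = 1 /\
     forall z, s z = (a * z + b) / (b^* * z + a^*)].

(* (i) The operator E : A |-> {2x - y | x, y in A} of point reflections commutes
   with affine maps and sends s(o_r) to s(o_3r); its iterates exhaust the
   double cones.  So for o <> a, p_(o,a) can be taken to be the single
   1-simplex (E^(k+1) o; a, o) for any k with a contained in E^k o.
   (ii) Freely reducing p_(o,a) for the two open semicircles o, a gives a
   reduced word that is fixed by every Moebius map fixing o and a, hence so is
   the support of its first letter, an interval Y properly containing o.  The
   hyperbolic Moebius maps with fixed points +-1 fix both semicircles and act
   transitively on the lower one, so Y would contain both semicircles, which is
   impossible for an interval with closure different from S^1. *)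

From Pilot Require Import Defs.
From mathcomp Require Import all_boot all_order all_algebra.
From mathcomp Require Import all_classical all_reals.
From mathcomp Require Import complex trigo.
From mathcomp Require Import ring lra.
From Stdlib Require Import Relations.
Import Order.TTheory GRing.Theory Num.Theory.
Set Implicit Arguments.
Unset Strict Implicit.
Unset Printing Implicit Defensive.
Local Open Scope classical_set_scope.
Local Open Scope ring_scope.

Lemma sub_image_inj_on (T U : Type) (f : T -> U) (D A B : set T) :
  {in D &, injective f} -> A `<=` D -> B `<=` D ->
  f @` A `<=` f @` B -> A `<=` B.
Proof.
move=> f_inj AD BD fAB x Ax.
have [y By fyx] : (f @` B) (f x) by apply: fAB; exists x.
by rewrite -(f_inj y x) // in_setE; [exact: BD | exact: AD].
Qed.

Lemma image_inj_on_eq (T U : Type) (f : T -> U) (D A B : set T) :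
  {in D &, injective f} -> A `<=` D -> B `<=` D ->
  f @` A = f @` B -> A = B.
Proof.
move=> f_inj AD BD fAB; apply/seteqP; split;
  by apply: (sub_image_inj_on f_inj) => //; rewrite fAB.
Qed.

Section FreeReduction.
Variable X : Type.
Implicit Types (b c : simplex1 X) (w : seq (simplex1 X)).

Lemma opp_simplexK : involutive (@opp_simplex X).
Proof. by case. Qed.

Lemma T1_opp (K : set (set X)) b : T1 K b -> T1 K (opp_simplex b).
Proof. by case=> -[*] *; do !split. Qed.

Definition cons_reduce b w :=
  if w is c :: w' then (if `[< c = opp_simplex b >] then w' else b :: w)
  else [:: b].

Definition reduce w := foldr cons_reduce [::] w.

Fixpoint reduced w : Prop :=
  if w is b :: w' then
    (if w' is c :: _ then c <> opp_simplex b else True) /\ reduced w'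
  else True.

Lemma reduced_cons_reduce b w : reduced w -> reduced (cons_reduce b w).
Proof. by case: w => //= c w red_cw; case: asboolP => [_|]; [case: red_cw|]. Qed.

Lemma reduce_reduced w : reduced (reduce w).
Proof. by elim: w => //= b w; exact: reduced_cons_reduce. Qed.

Lemma cons_reduceK b w :
  reduced w -> cons_reduce b (cons_reduce (opp_simplex b) w) = w.
Proof.
case: w => [|c w] /=; first by rewrite asboolT.
rewrite opp_simplexK; have [<-|cb] := pselect (c = b) => red_cw.
  rewrite asboolT //; case: w red_cw => [|c' w] //= [cc' _].
  by rewrite asboolF.
by rewrite asboolF //= asboolT.
Qed.

Lemma reduce_cat w1 w2 : reduce (w1 ++ w2) = foldr cons_reduce (reduce w2) w1.
Proof. by rewrite /reduce foldr_cat. Qed.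

Lemma fg_eq_reduce (K : set (set X)) w1 w2 : fg_eq K w1 w2 -> reduce w1 = reduce w2.
Proof.
elim=> [_ _ [w w' b _]| // | _ _ _ -> // | _ _ _ _ -> _ -> //].
by rewrite !reduce_cat /= cons_reduceK //; exact: reduce_reduced.
Qed.

Lemma is_path_reduce (K : set (set X)) A B w :
  is_path K A B w -> is_path K A B (reduce w).
Proof.
elim: w A => //= b w IHw A [Tb bA /IHw]; case: (reduce w) => [|c w'] /=.
  by move=> ?; split.
by case: asboolP => [-> [_ _]|_ ?] /=; [rewrite bA | split].
Qed.

Lemma reduce_map (K : set (set X)) (f : simplex1 X -> simplex1 X) A B w :
  (forall b, f (opp_simplex b) = opp_simplex (f b)) ->
  {in (T1 K : set _) &, injective f} ->
  is_path K A B w -> reduce (map f w) = map f (reduce w).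
Proof.
move=> f_opp f_inj; elim: w A => //= b w IHw A [Tb _ path_w].
rewrite (IHw _ path_w); have := is_path_reduce path_w.
case: (reduce w) => [|c w'] //= [Tc _ _].
have -> : `[< f c = opp_simplex (f b) >] = `[< c = opp_simplex b >].
  apply: asbool_equiv_eq; split => [|->//]; rewrite -f_opp.
  by apply: f_inj; rewrite in_setE //; exact: T1_opp.
by case: asboolP.
Qed.

End FreeReduction.

Section ExpandingOperator.
Variables (X : Type) (K : set (set X)) (S : set (X -> X)) (E : set X -> set X).
Hypothesis K_E : forall A, K A -> K (E A).
Hypothesis sub_E : forall A, A `<=` E A.
Hypothesis E_not_sub : forall A, K A -> ~ E A `<=` A.
Hypothesis E_exhausts : forall A B, K A -> K B -> exists k, B `<=` iter k E A.
Hypothesis S_inj : forall s, S s -> injective s.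
Hypothesis E_image : forall s A, S s -> E (s @` A) = s @` E A.

(* Any admissible index would do; [xget] makes the choice depend only on the set
   of admissible indices, which every symmetry preserves. *)
Definition exhaust_index (o a : set X) := xget 0%N [set k | a `<=` iter k E o].

Definition frame_letter (o a : set X) :=
  Simplex1 (iter (exhaust_index o a).+1 E o) a o.

Definition frame_path (o a : set X) :=
  if pselect (o = a) then [::] else [:: frame_letter o a].

Lemma K_iter k A : K A -> K (iter k E A).
Proof. by move=> KA; elim: k => //= k; exact: K_E. Qed.

Lemma sub_iter k A : A `<=` iter k E A.
Proof. by elim: k => //= k /subset_trans; apply. Qed.

Lemma iter_image k s A : S s -> iter k E (s @` A) = s @` iter k E A.
Proof. by move=> Ss; elim: k => //= k ->; exact: E_image. Qed.

Lemma frame_letter_T1 o a : K o -> K a -> T1 K (frame_letter o a).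
Proof.
move=> Ko Ka; set B := iter (exhaust_index o a) E o.
have aB : a `<=` B := xgetPex 0%N (E_exhausts Ko Ka).
have oB : o `<=` B by exact: sub_iter.
have not_sub C : C `<=` B -> C <> E B.
  by move=> CB EBC; apply: (@E_not_sub B); [exact: K_iter | rewrite -EBC].
split; [split=> //= | exact: not_sub aB | exact: not_sub oB].
- exact: K_E (K_iter _ Ko).
- by move=> x /aB /sub_E.
- by move=> x /oB /sub_E.
Qed.

Lemma frame_path_act s o a : S s ->
  frame_path (s @` o) (s @` a) = map (act_simplex s) (frame_path o a).
Proof.
move=> Ss; have s_inj : {in [set: X] &, injective s} := in2W (S_inj Ss).
have s_sub A B : (s @` A `<=` s @` B) <-> (A `<=` B).
  by split; [exact: sub_image_inj_on s_inj (subsetT A) (subsetT B) | exact: image_subset].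
have s_eq A B : (s @` A = s @` B) = (A = B).
  by apply/propext; split=> [|->//]; exact: image_inj_on_eq s_inj (subsetT A) (subsetT B).
rewrite /frame_path s_eq; case: pselect => //= _; rewrite /frame_letter /act_simplex /=.
have -> : exhaust_index (s @` o) (s @` a) = exhaust_index o a.
  by congr xget; apply/funext => k; apply/propext; rewrite /= iter_image //; exact: s_sub.
by rewrite iter_image // E_image.
Qed.

Theorem expanding_covariant_frame : has_covariant_path_frame_system K S.
Proof.
exists frame_path; split.
- move=> o a Ko Ka; rewrite /frame_path; case: pselect => //= _.
  by split; [exact: frame_letter_T1 | | ].
- by move=> o _; rewrite /frame_path; case: pselect => [?|//]; exact: rst_refl.
- by move=> s a x Ss _ _; rewrite frame_path_act //; exact: rst_refl.
Qed.

End ExpandingOperator.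

Lemma act_simplex_inj (X : Type) (K : set (set X)) (g : X -> X) :
  (forall A B, K A -> K B -> g @` A = g @` B -> A = B) ->
  {in (T1 K : set _) &, injective (act_simplex g)}.
Proof.
move=> g_inj [A A0 A1] [B B0 B1]; rewrite !in_setE.
move=> [[/= KA KA0 KA1 _ _] _ _] [[/= KB KB0 KB1 _ _] _ _] [/g_inj-> // /g_inj-> //].
by move/g_inj->.
Qed.

Theorem covariant_frame_fixed_superset (X : Type) (K : set (set X))
    (S G : set (X -> X)) (o a : set X) :
  has_covariant_path_frame_system K S -> K o -> K a -> o <> a -> G `<=` S ->
  (forall g, G g -> g @` o = o /\ g @` a = a) ->
  (forall g, G g -> forall A B, K A -> K B -> g @` A = g @` B -> A = B) ->
  exists Y, [/\ K Y, o `<=` Y, Y <> o & forall g, G g -> g @` Y = Y].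
Proof.
case=> p [p_path _ p_cov] Ko Ka oa GS G_fix G_inj.
have path_oa := p_path o a Ko Ka.
have fixed g : G g -> map (act_simplex g) (reduce (p o a)) = reduce (p o a).
  move=> Gg; have [go ga] := G_fix g Gg.
  rewrite -(reduce_map _ (act_simplex_inj (G_inj g Gg)) path_oa) //.
  by apply: (@fg_eq_reduce _ K); have := p_cov g o a (GS _ Gg) Ko Ka; rewrite go ga.
move: (is_path_reduce path_oa) fixed; case: (reduce (p o a)) => [//|b w] /=.
case=> -[[Kb _ _ _ ob] _ bo] bd1o _ fixed.
rewrite -bd1o; exists (supp b); split=> // [/esym //|g Gg].
by case: (fixed g Gg) => /(congr1 (@supp X)).
Qed.

Lemma sqrt_sum3_triangle (R : rcfType) (a1 a2 a3 b1 b2 b3 : R) :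
  Num.sqrt ((a1 + b1) ^+ 2 + (a2 + b2) ^+ 2 + (a3 + b3) ^+ 2) <=
  Num.sqrt (a1 ^+ 2 + a2 ^+ 2 + a3 ^+ 2) + Num.sqrt (b1 ^+ 2 + b2 ^+ 2 + b3 ^+ 2).
Proof.
set A := a1 ^+ 2 + _ + _; set B := b1 ^+ 2 + _ + _.
set S := a1 * b1 + a2 * b2 + a3 * b3.
have A0 : 0 <= A by rewrite !addr_ge0 ?sqr_ge0.
have B0 : 0 <= B by rewrite !addr_ge0 ?sqr_ge0.
have cauchy_schwarz : S ^+ 2 <= A * B.
  have lagrange : A * B - S ^+ 2 = (a1 * b2 - a2 * b1) ^+ 2 +
      (a1 * b3 - a3 * b1) ^+ 2 + (a2 * b3 - a3 * b2) ^+ 2 by rewrite /A /B /S; ring.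
  by rewrite -subr_ge0 lagrange !addr_ge0 ?sqr_ge0.
have S_le : S <= Num.sqrt A * Num.sqrt B.
  rewrite -sqrtrM // (le_trans (ler_norm S)) // -sqrtr_sqr.
  exact: ler_wsqrtr.
have sum0 : 0 <= Num.sqrt A + Num.sqrt B by rewrite addr_ge0 ?sqrtr_ge0.
rewrite -(ger0_norm sum0) -[leRHS]sqrtr_sqr ler_wsqrtr // [leRHS]sqrrD !sqr_sqrtr //.
have -> : (a1 + b1) ^+ 2 + (a2 + b2) ^+ 2 + (a3 + b3) ^+ 2 = A + B + S *+ 2.
  by rewrite /A /B /S; ring.
by rewrite !mulr2n; lra.
Qed.

Lemma sqrt_sum3_le (R : rcfType) (a b c : R) :
  Num.sqrt (a ^+ 2 + b ^+ 2 + c ^+ 2) <= `|a| + `|b| + `|c|.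
Proof.
have abc0 : 0 <= `|a| + `|b| + `|c| by rewrite !addr_ge0.
rewrite -(ger0_norm abc0) -[leRHS]sqrtr_sqr ler_wsqrtr // -[a ^+ 2]real_normK ?num_real //.
rewrite -[b ^+ 2]real_normK ?num_real // -[c ^+ 2]real_normK ?num_real //.
have := normr_ge0 a; have := normr_ge0 b; have := normr_ge0 c; nra.
Qed.

Definition point_reflections {V : zmodType} (A : set V) : set V :=
  [set x *+ 2 - y | x in A & y in A].

Lemma sub_point_reflections (V : zmodType) (A : set V) : A `<=` point_reflections A.
Proof. by move=> x Ax; exists x => //; exists x => //; rewrite mulr2n addrK. Qed.

Lemma point_reflections_affine (V : zmodType) (f : {additive V -> V}) (c : V)
    (s : V -> V) :
  (forall x, s x = f x + c) ->
  forall A, point_reflections (s @` A) = s @` point_reflections A.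
Proof.
move=> sE A.
have s_refl x y : s x *+ 2 - s y = s (x *+ 2 - y).
  by rewrite !sE raddfB raddfMn mulrnDl opprD addrACA [c *+ 2]mulr2n addrK.
apply/seteqP; split=> w.
  move=> [_ [x Ax <-] [_ [y Ay <-] <-]].
  by exists (x *+ 2 - y); [exists x => //; exists y | rewrite s_refl].
move=> [_ [x Ax [y Ay <-]] <-].
by exists (s x); [exists x | exists (s y); [exists y | rewrite s_refl]].
Qed.

Section Minkowski.
Variable R : realType.
Local Notation V := 'cV[R]_4.
Local Notation K := (@double_cones R).

Definition dc_norm (x : V) : R := `|x ord0 ord0| + spatial_norm x.

Lemma std_double_coneE r x : std_double_cone r x = (dc_norm x < r).
Proof. by []. Qed.

Lemma spatial_norm_ge0 (x : V) : 0 <= spatial_norm x.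
Proof. exact: sqrtr_ge0. Qed.

Lemma spatial_normD (x y : V) :
  spatial_norm (x + y) <= spatial_norm x + spatial_norm y.
Proof.
rewrite /spatial_norm !big_ord_recl !big_ord0 !mxE !addr0 !addrA.
exact: sqrt_sum3_triangle.
Qed.

Lemma spatial_normZ (c : R) (x : V) : spatial_norm (c *: x) = `|c| * spatial_norm x.
Proof.
rewrite /spatial_norm -sqrtr_sqr -sqrtrM ?sqr_ge0 // mulr_sumr.
by congr Num.sqrt; apply: eq_bigr => i _; rewrite !mxE exprMn.
Qed.

Lemma dc_norm_ge0 (x : V) : 0 <= dc_norm x.
Proof. by rewrite addr_ge0 ?spatial_norm_ge0. Qed.

Lemma dc_normD (x y : V) : dc_norm (x + y) <= dc_norm x + dc_norm y.
Proof.
rewrite /dc_norm mxE addrACA lerD ?ler_normD //; exact: spatial_normD.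
Qed.

Lemma dc_normZ (c : R) (x : V) : dc_norm (c *: x) = `|c| * dc_norm x.
Proof. by rewrite /dc_norm spatial_normZ mxE normrM mulrDr. Qed.

Lemma dc_normN (x : V) : dc_norm (- x) = dc_norm x.
Proof. by rewrite -scaleN1r dc_normZ normrN normr1 mul1r. Qed.

Lemma dc_norm_le_sum (x : V) : dc_norm x <= \sum_(i < 4) `|x i ord0|.
Proof.
rewrite big_ord_recl /dc_norm lerD2l /spatial_norm.
rewrite !big_ord_recl !big_ord0 !addr0 !addrA.
exact: sqrt_sum3_le.
Qed.

Lemma coord_le_dc_norm (x : V) (i : 'I_4) : `|x i ord0| <= dc_norm x.
Proof.
have [j ->|->] := unliftP ord0 i; last by rewrite lerDl spatial_norm_ge0.
apply: le_trans (ler_wpDl (normr_ge0 _) (lexx _)).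
rewrite /spatial_norm -sqrtr_sqr ler_wsqrtr //.
by rewrite (bigD1 j) //= lerDl sumr_ge0 // => k _; exact: sqr_ge0.
Qed.

Definition mx_abs_sum (M : 'M[R]_4) : R := \sum_(i < 4) \sum_(j < 4) `|M i j|.

Lemma mx_abs_sum_ge0 M : 0 <= mx_abs_sum M.
Proof. by do 2!apply: sumr_ge0 => ? _. Qed.

Lemma dc_norm_mul (M : 'M[R]_4) (x : V) : dc_norm (M *m x) <= mx_abs_sum M * dc_norm x.
Proof.
apply: le_trans (dc_norm_le_sum _) _; rewrite /mx_abs_sum mulr_suml.
apply: ler_sum => i _; rewrite mxE mulr_suml (le_trans (ler_norm_sum _ _ _)) //.
by apply: ler_sum => j _; rewrite normrM ler_wpM2l // coord_le_dc_norm.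
Qed.

Lemma point_reflections_cone (r : R) :
  point_reflections (std_double_cone r) = std_double_cone (3 * r).
Proof.
apply/seteqP; split=> w.
  move=> [x xr] [y yr] <-; rewrite !std_double_coneE in xr yr *.
  have := dc_normD (x *+ 2) (- y); have := dc_normD x x.
  by rewrite dc_normN mulr2n; lra.
rewrite std_double_coneE => w3r; set x := 3^-1 *: w.
have xr : dc_norm x < r by rewrite dc_normZ gtr0_norm ?invr_gt0 //; lra.
exists x; first exact: xr.
exists (- x); first by rewrite std_double_coneE dc_normN.
by rewrite opprK -mulrSr /x -scaler_nat scalerA divff ?scale1r // pnatr_eq0.
Qed.

Lemma poincare_affine (s : V -> V) : poincare s ->
  exists L c, L \in unitmx /\ forall x, s x = L *m x + c.
Proof.
case=> L [c [[_ detL _] sE]]; exists L, c; split=> //.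
by rewrite unitmxE detL unitr1.
Qed.

Lemma poincare_inj (s : V -> V) : poincare s -> injective s.
Proof.
case/poincare_affine=> L [c [L_unit sE]] x y; rewrite !sE => /addIr.
by move/(congr1 (mulmx (invmx L))); rewrite !mulKmx.
Qed.

Lemma point_reflections_poincare (s : V -> V) A : poincare s ->
  point_reflections (s @` A) = s @` point_reflections A.
Proof.
by case/poincare_affine=> L [c [_ sE]]; exact: (point_reflections_affine (f := mulmx L)).
Qed.

Lemma iter_point_reflections_double_cone k (s : V -> V) (r : R) : poincare s ->
  iter k point_reflections (s @` std_double_cone r) =
  s @` std_double_cone (3 ^+ k * r).
Proof.
move=> Ps; elim: k => [|k /= ->]; first by rewrite expr0 mul1r.
by rewrite point_reflections_poincare // point_reflections_cone exprS mulrA.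
Qed.

Lemma double_cones_point_reflections A : K A -> K (point_reflections A).
Proof.
case=> s [r [Ps r0 ->]]; exists s, (3 * r); split; rewrite ?mulr_gt0 //.
exact: (iter_point_reflections_double_cone 1).
Qed.

Definition time_unit : V := delta_mx ord0 ord0.

Lemma dc_norm_time_unit : dc_norm time_unit = 1.
Proof.
rewrite /dc_norm /spatial_norm mxE eqxx normr1 big1 ?sqrtr0 ?addr0 // => i _.
by rewrite mxE eq_sym (negbTE (neq_lift ord0 i)) expr0n.
Qed.

Lemma point_reflections_not_sub A : K A -> ~ point_reflections A `<=` A.
Proof.
case=> s [r [Ps r0 ->]].
have := iter_point_reflections_double_cone 1 r Ps; rewrite expr1 /= => ->.
move=> /(sub_image_inj_on (in2W (poincare_inj Ps)) (subsetT _) (subsetT _)).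
have norm_2r : dc_norm ((2 * r) *: time_unit) = 2 * r.
  by rewrite dc_normZ dc_norm_time_unit mulr1 gtr0_norm ?mulr_gt0.
move=> /(_ ((2 * r) *: time_unit)); rewrite !std_double_coneE norm_2r => sub.
have : 2 * r < r by apply: sub; lra.
lra.
Qed.

Lemma double_cones_exhaust A B : K A -> K B ->
  exists k, B `<=` iter k point_reflections A.
Proof.
case=> s [r [Ps r0 ->]] [s' [r' [Ps' r'0 ->]]].
have [L [c [L_unit sE]]] := poincare_affine Ps.
have [L' [c' [_ s'E]]] := poincare_affine Ps'.
pose bound := mx_abs_sum (invmx L) * (mx_abs_sum L' * r' + dc_norm (c' - c)).
have bound_ge0 : 0 <= bound / r.
  apply: divr_ge0 (ltW r0); apply: mulr_ge0 (mx_abs_sum_ge0 _) _.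
  by rewrite addr_ge0 ?dc_norm_ge0 // mulr_ge0 ?mx_abs_sum_ge0 // ltW.
pose k := Num.Def.archi_bound (bound / r).
have k_le : (k%:R : R) <= 3 ^+ k by rewrite -natrX ler_nat ltnW // ltn_expl.
exists k; rewrite iter_point_reflections_double_cone // => _ [y yr' <-].
exists (invmx L *m (L' *m y + (c' - c))); last first.
  by rewrite sE mulKVmx // s'E addrA addrNK.
rewrite std_double_coneE (le_lt_trans (dc_norm_mul _ _)) //.
apply: (@le_lt_trans _ _ bound); last first.
  have bound_lt : bound < k%:R * r by rewrite -ltr_pdivrMr // archi_boundP.
  by apply: lt_le_trans bound_lt _; rewrite ler_wpM2r // ltW.
rewrite ler_wpM2l ?mx_abs_sum_ge0 // (le_trans (dc_normD _ _)) // lerD2r.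
by rewrite (le_trans (dc_norm_mul _ _)) // ler_wpM2l ?mx_abs_sum_ge0 // ltW.
Qed.

Theorem double_cones_covariant_frame :
  has_covariant_path_frame_system K (@poincare R).
Proof.
apply: (@expanding_covariant_frame _ _ _ point_reflections).
- exact: double_cones_point_reflections.
- exact: sub_point_reflections.
- exact: point_reflections_not_sub.
- exact: double_cones_exhaust.
- exact: poincare_inj.
- by move=> s A; exact: point_reflections_poincare.
Qed.

End Minkowski.

Section Circle.
Variable R : realType.
Local Notation Re := (@complex.Re R).
Local Notation Im := (@complex.Im R).
Local Notation K := (@circle_intervals R).

Definition unit_circle : set R[i] := [set z | Re z ^+ 2 + Im z ^+ 2 = 1].
Definition upper_semicircle : set R[i] := [set z | unit_circle z /\ 0 < Im z].
Definition lower_semicircle : set R[i] := [set z | unit_circle z /\ Im z < 0].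

(* (1 + i s) / (1 - i s): the real line maps onto the unit circle minus -1. *)
Definition cayley (s : R) : R[i] :=
  Complex ((1 - s ^+ 2) / (1 + s ^+ 2)) ((2 * s) / (1 + s ^+ 2)).

Definition cayley_inv (z : R[i]) : R := Im z / (1 + Re z).

Lemma add1_sqr_gt0 (s : R) : 0 < 1 + s ^+ 2.
Proof. by rewrite ltr_pwDl ?sqr_ge0. Qed.

Lemma add1_sqr_neq0 (s : R) : 1 + s ^+ 2 != 0.
Proof. by rewrite gt_eqF ?add1_sqr_gt0. Qed.

Lemma cayley_unit s : unit_circle (cayley s).
Proof. by rewrite /unit_circle /=; field; rewrite add1_sqr_neq0. Qed.

Lemma cayleyK : cancel cayley cayley_inv.
Proof.
move=> s; rewrite /cayley_inv /=; field.
rewrite add1_sqr_neq0 (_ : _ + (1 - _) = 2) ?pnatr_eq0 //; ring.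
Qed.

Lemma cayley_invK z : unit_circle z -> 1 + Re z != 0 -> cayley (cayley_inv z) = z.
Proof.
case: z => x y; rewrite /unit_circle /cayley_inv /= => unit_xy x_neq.
have den_neq0 : (1 + x) ^+ 2 + y ^+ 2 != 0.
  by apply: contra x_neq => /eqP den0; apply/eqP; nra.
apply/eqP; rewrite eq_complex /=; apply/andP; split; rewrite -subr_eq0; apply/eqP.
  rewrite (_ : _ - x = (1 + x) * (1 - (x ^+ 2 + y ^+ 2)) / ((1 + x) ^+ 2 + y ^+ 2)).
    by rewrite unit_xy subrr mulr0 mul0r.
  by field; rewrite x_neq den_neq0.
rewrite (_ : _ - y = y * (1 - (x ^+ 2 + y ^+ 2)) / ((1 + x) ^+ 2 + y ^+ 2)).
  by rewrite unit_xy subrr mulr0 mul0r.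
by field; rewrite x_neq den_neq0.
Qed.

Lemma unit_circle_cases z : unit_circle z -> z = -1 \/ z = cayley (cayley_inv z).
Proof.
move=> unit_z; have [x_eq|x_neq] := eqVneq (1 + Re z) 0; last by right; rewrite cayley_invK.
left; case: z unit_z x_eq => x y; rewrite /unit_circle /= => unit_xy x_eq.
have x_N1 : x = -1 by lra.
have /eqP : y ^+ 2 = 0 by rewrite x_N1 in unit_xy; lra.
rewrite sqrf_eq0 x_N1 => /eqP ->.
by apply/eqP; rewrite eq_complex /= oppr0 !eqxx.
Qed.

Lemma cayley_neqN1 s : cayley s != -1.
Proof.
apply/eqP => /(congr1 Re) /= /(congr1 ( *%R^~ (1 + s ^+ 2))).
by rewrite mulfVK ?add1_sqr_neq0 //; lra.
Qed.

Lemma Im_cayley_gt0 s : (0 < Im (cayley s)) = (0 < s).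
Proof. by rewrite /= pmulr_lgt0 ?invr_gt0 ?add1_sqr_gt0 // pmulr_rgt0. Qed.

Lemma Im_cayley_lt0 s : (Im (cayley s) < 0) = (s < 0).
Proof. by rewrite /= pmulr_llt0 ?invr_gt0 ?add1_sqr_gt0 // pmulr_rlt0. Qed.

Lemma upper_semicircleE : upper_semicircle = cayley @` [set s | 0 < s].
Proof.
apply/seteqP; split=> [z [/unit_circle_cases [-> | z_eq] Im_gt0]|_ [s s_gt0 <-]].
- by move: Im_gt0; rewrite /= oppr0 ltxx.
- by exists (cayley_inv z) => //; rewrite /= -Im_cayley_gt0 -z_eq.
- by split; [exact: cayley_unit | rewrite Im_cayley_gt0].
Qed.

Lemma lower_semicircleE : lower_semicircle = cayley @` [set s | s < 0].
Proof.
apply/seteqP; split=> [z [/unit_circle_cases [-> | z_eq] Im_lt0]|_ [s s_lt0 <-]].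
- by move: Im_lt0; rewrite /= oppr0 ltxx.
- by exists (cayley_inv z) => //; rewrite /= -Im_cayley_lt0 -z_eq.
- by split; [exact: cayley_unit | rewrite Im_cayley_lt0].
Qed.

(* A hyperbolic Moebius map fixing +-1; in the coordinate [cayley] it is
   s |-> m^2 s. *)
Definition dilation (m : R) (z : R[i]) : R[i] :=
  (((1 + m ^+ 2) / (2 * m))%:C%C * z + ((1 - m ^+ 2) / (2 * m))%:C%C) /
  (((1 - m ^+ 2) / (2 * m))%:C%C * z + ((1 + m ^+ 2) / (2 * m))%:C%C).

Lemma dilation_mobius m : 0 < m -> mobius (dilation m).
Proof.
move=> m_gt0; exists ((1 + m ^+ 2) / (2 * m))%:C%C, ((1 - m ^+ 2) / (2 * m))%:C%C.
rewrite !conj_Creal ?complex_real // -!rmorphM -rmorphB /=; split=> //.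
by rewrite [X in (X%:C)%C](_ : _ = 1) //; field; rewrite gt_eqF.
Qed.

Lemma dilation_cayley m s : 0 < m -> dilation m (cayley s) = cayley (m ^+ 2 * s).
Proof.
move=> m_gt0; have m_neq0 : m != 0 by rewrite gt_eqF.
have d_neq0 := add1_sqr_neq0 s; have ms_neq0 := add1_sqr_neq0 (m ^+ 2 * s).
rewrite /dilation; set a := (1 + m ^+ 2) / (2 * m); set b := (1 - m ^+ 2) / (2 * m).
have den_neq0 : b%:C%C * cayley s + a%:C%C != 0.
  apply: contraTneq isT => /(congr1 Re); rewrite /cayley /a /b; simpc => /=.
  rewrite (_ : _ * _ + _ = (1 + (m * s) ^+ 2) / (m * (1 + s ^+ 2))).
    by move/eqP; rewrite gt_eqF // divr_gt0 ?mulr_gt0 ?add1_sqr_gt0.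
  by field; rewrite d_neq0 m_neq0.
apply/(canLR (mulfK den_neq0))/eqP; rewrite /cayley /a /b; simpc.
by rewrite eq_complex /=; apply/andP; split; apply/eqP; field; rewrite m_neq0 d_neq0 ms_neq0.
Qed.

Lemma dilationN1 m : 0 < m -> dilation m (-1) = -1.
Proof.
move=> m_gt0; rewrite /dilation !mulrN1 -!rmorphN -!rmorphD -fmorph_div /=.
by congr (_%:C%C); field; rewrite !gt_eqF //; nra.
Qed.

Lemma dilation_inj_on m : 0 < m -> {in unit_circle &, injective (dilation m)}.
Proof.
move=> m_gt0 z w; rewrite !in_setE.
move=> /unit_circle_cases [->|->] /unit_circle_cases [->|->] //;
  rewrite ?dilationN1 ?dilation_cayley //.
- by move/esym/eqP; rewrite (negbTE (cayley_neqN1 _)).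
- by move/eqP; rewrite (negbTE (cayley_neqN1 _)).
have m2_neq0 : m ^+ 2 != 0 by rewrite expf_neq0 ?gt_eqF.
by move/(can_inj cayleyK)/(mulfI m2_neq0) ->.
Qed.

Lemma dilation_cayley_image m (P : set R) : 0 < m ->
  (forall s, P s <-> P (m ^+ 2 * s)) -> dilation m @` (cayley @` P) = cayley @` P.
Proof.
move=> m_gt0 P_scale; have m2_neq0 : m ^+ 2 != 0 by rewrite expf_neq0 ?gt_eqF.
apply/seteqP; split=> z.
  move=> [_ [s Ps <-] <-]; rewrite dilation_cayley //.
  by exists (m ^+ 2 * s) => //; apply/(P_scale s).
move=> [s Ps <-]; exists (cayley (s / m ^+ 2)).
  by exists (s / m ^+ 2) => //; apply/P_scale; rewrite mulrC mulfVK.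
by rewrite dilation_cayley // mulrC mulfVK.
Qed.

Lemma dilation_upper m : 0 < m -> dilation m @` upper_semicircle = upper_semicircle.
Proof.
move=> m_gt0; rewrite upper_semicircleE dilation_cayley_image // => s.
by rewrite /= pmulr_rgt0 // exprn_gt0.
Qed.

Lemma dilation_lower m : 0 < m -> dilation m @` lower_semicircle = lower_semicircle.
Proof.
move=> m_gt0; rewrite lower_semicircleE dilation_cayley_image // => s.
by rewrite /= pmulr_rlt0 // exprn_gt0.
Qed.

Lemma dilation_lower_transitive z w : lower_semicircle z -> lower_semicircle w ->
  exists2 m, 0 < m & dilation m z = w.
Proof.
rewrite lower_semicircleE => -[s s_lt0 <-] [t t_lt0 <-].
have ts_gt0 : 0 < t / s by rewrite -divrNN divr_gt0 // oppr_gt0.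
exists (Num.sqrt (t / s)); first by rewrite sqrtr_gt0.
by rewrite dilation_cayley ?sqrtr_gt0 // sqr_sqrtr ?ltW // mulfVK // ltr0_neq0.
Qed.

Lemma expi_unit (t : R) : unit_circle (expi t).
Proof. exact: cos2Dsin2. Qed.

Lemma arc_sub_unit (al be : R) : Defs.arc al be `<=` unit_circle.
Proof. by move=> _ [t [_ ->]]; exact: expi_unit. Qed.

Lemma arc_upper : Defs.arc 0 pi = upper_semicircle.
Proof.
apply/seteqP; split=> [_ [t [t_in ->]]|[x y] []].
  by split; [exact: expi_unit | exact: sin_gt0_pi].
rewrite /unit_circle /= => unit_xy y_gt0.
have x_in : -1 < x < 1 by apply/andP; split; nra.
exists (acos x); split.
  by apply/andP; split; [apply: acos_gt0 | apply: acos_ltpi]; lra.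
rewrite /expi acosK ?in_itv /=; last by apply/andP; split; lra.
rewrite sin_acos; last by apply/andP; split; lra.
by rewrite (_ : 1 - x ^+ 2 = y ^+ 2) ?sqrtr_sqr ?gtr0_norm //; lra.
Qed.

Lemma arc_lower : Defs.arc pi (2 * pi) = lower_semicircle.
Proof.
apply/seteqP; split=> [_ [t [t_in ->]]|[x y] []].
  split; first exact: expi_unit.
  have : 0 < sin (t - pi) by apply: sin_gt0_pi; lra.
  by rewrite sinB cospi sinpi /=; lra.
rewrite /unit_circle /= => unit_xy y_lt0.
have x_in : -1 < x < 1 by apply/andP; split; nra.
have acos_gt0 : 0 < acos x by apply: acos_gt0; lra.
have acos_ltpi : acos x < pi by apply: acos_ltpi; lra.
exists (2 * pi - acos x); split; first lra.
rewrite /expi cosB sinB mulr_natl cos2pi sin2pi acosK ?in_itv /=; last first.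
  by apply/andP; split; lra.
rewrite sin_acos; last by apply/andP; split; lra.
rewrite (_ : 1 - x ^+ 2 = y ^+ 2) ?sqrtr_sqr ?ltr0_norm //; last lra.
by congr Complex; lra.
Qed.

Lemma cos_lt1 (d : R) : 0 < d < pi *+ 2 -> cos d < 1.
Proof.
move=> d_in; have sin_gt0 : 0 < sin (d / 2) by apply: sin_gt0_pi; lra.
rewrite -[d in cos d](@divfK _ 2) ?pnatr_eq0 // mulr_natr cos_mulr2n cos2sin2.
by have := mulr_gt0 sin_gt0 sin_gt0; rewrite -expr2 mulr2n; lra.
Qed.

Lemma cos_sin0 (t : R) : sin t = 0 -> cos t = 1 \/ cos t = -1.
Proof.
move=> sin0; have := cos2Dsin2 t; rewrite sin0 expr0n addr0 => /eqP.
by rewrite sqrf_eq1 => /orP[] /eqP; [left | right].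
Qed.

Lemma expi_notin_arc (al be t : R) : be < al + 2 * pi -> be - 2 * pi <= t <= al ->
  ~ Defs.arc al be (expi t).
Proof.
move=> be_lt t_in [u [u_in [cos_ut sin_ut]]].
have : cos (u - t) = 1 by rewrite cosB -cos_ut -sin_ut cos2Dsin2.
have : cos (u - t) < 1 by apply: cos_lt1; rewrite -mulr_natl; lra.
lra.
Qed.

(* [expi al] lies outside the arc, hence at +-1; then points just before [al]
   lie outside the arc and on an open semicircle. *)
Lemma arc_not_sup_semicircles (al be : R) : al < be < al + 2 * pi ->
  upper_semicircle `<=` Defs.arc al be -> lower_semicircle `<=` Defs.arc al be ->
  False.
Proof.
move=> be_in upper_sub lower_sub.
have sin_al : sin al = 0.
  have al_out : ~ Defs.arc al be (expi al) by apply: expi_notin_arc; lra.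
  have [sin_lt0|sin_gt0|//] := ltgtP (sin al) 0; exfalso; apply: al_out.
    by apply: lower_sub; split; [exact: expi_unit|].
  by apply: upper_sub; split; [exact: expi_unit|].
pose e := (2 * pi - (be - al)) / 2.
have sin_e : 0 < sin e by apply: sin_gt0_pi; rewrite /e; lra.
have al_e_out : ~ Defs.arc al be (expi (al - e)) by apply: expi_notin_arc; rewrite /e; lra.
have sin_al_e : sin (al - e) = - cos al * sin e by rewrite sinB sin_al mul0r sub0r mulNr.
apply: al_e_out; have [cos_al|cos_al] := cos_sin0 sin_al; rewrite cos_al in sin_al_e.
  by apply: lower_sub; split; [exact: expi_unit | rewrite /= sin_al_e; lra].
by apply: upper_sub; split; [exact: expi_unit | rewrite /= sin_al_e; lra].
Qed.

Lemma arc_meets_lower (al be : R) z : be < al + 2 * pi ->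
  Defs.arc al be z -> ~ upper_semicircle z ->
  exists w, Defs.arc al be w /\ lower_semicircle w.
Proof.
move=> be_lt [t [t_in ->]] not_upper.
have [sin_lt0|sin_gt0|sin0] := ltgtP (sin t) 0.
- by exists (expi t); split; [exists t | split; [exact: expi_unit|]].
- by exfalso; apply: not_upper; split; [exact: expi_unit|].
(* At +-1, move slightly towards the lower semicircle, inside the arc. *)
have [cos1|cosN1] := cos_sin0 sin0.
  pose e := (t - al) / 2; have sin_e : 0 < sin e by apply: sin_gt0_pi; rewrite /e; lra.
  exists (expi (t - e)); split; first by exists (t - e); split; rewrite // /e; lra.
  by split; [exact: expi_unit | rewrite /= sinB sin0 cos1; lra].
pose e := (be - t) / 2; have sin_e : 0 < sin e by apply: sin_gt0_pi; rewrite /e; lra.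
exists (expi (t + e)); split; first by exists (t + e); split; rewrite // /e; lra.
by split; [exact: expi_unit | rewrite /= sinD sin0 cosN1; lra].
Qed.

Lemma circle_intervals_sub_unit A : K A -> A `<=` unit_circle.
Proof. by case=> al [be [_ ->]]; exact: arc_sub_unit. Qed.

Lemma circle_intervals_upper : K upper_semicircle.
Proof. by rewrite -arc_upper; exists 0, pi; split=> //; have := pi_gt0 R; lra. Qed.

Lemma circle_intervals_lower : K lower_semicircle.
Proof. by rewrite -arc_lower; exists pi, (2 * pi); split=> //; have := pi_gt0 R; lra. Qed.

Lemma upper_neq_lower_semicircle : upper_semicircle <> lower_semicircle.
Proof.
move=> upper_lower; have : upper_semicircle (cayley 1).
  by split; [exact: cayley_unit | rewrite Im_cayley_gt0].
by rewrite upper_lower => -[_]; rewrite Im_cayley_lt0 ltr10.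
Qed.

Lemma no_dilation_invariant_arc Y : K Y -> upper_semicircle `<=` Y ->
  Y <> upper_semicircle -> ~ (forall m, 0 < m -> dilation m @` Y = Y).
Proof.
case=> al [be [be_in ->]] upper_sub Y_neq Y_inv.
have [z [Yz not_upper]] : exists z, Defs.arc al be z /\ ~ upper_semicircle z.
  apply: contra_notP Y_neq => no_z; apply/seteqP; split=> // z Yz.
  by apply: contra_notP no_z => ?; exists z.
have [w [Yw lower_w]] := arc_meets_lower (andP be_in).2 Yz not_upper.
apply: (arc_not_sup_semicircles be_in upper_sub) => v lower_v.
have [m m_gt0 <-] := dilation_lower_transitive lower_w lower_v.
by rewrite -(Y_inv m m_gt0); exists w.
Qed.

Theorem circle_intervals_no_covariant_frame :
  ~ has_covariant_path_frame_system K (@mobius R).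
Proof.
move=> cpfs; pose G := [set dilation m | m in [set m : R | 0 < m]].
have [|_ [m m_gt0 <-]|_ [m m_gt0 <-] A B KA KB|Y [KY upper_sub Y_neq Y_inv]] :=
  covariant_frame_fixed_superset (G := G) cpfs circle_intervals_upper
    circle_intervals_lower upper_neq_lower_semicircle.
- by move=> _ [m m_gt0 <-]; exact: dilation_mobius.
- by rewrite dilation_upper ?dilation_lower.
- apply: image_inj_on_eq (dilation_inj_on m_gt0) _ _;
    exact: circle_intervals_sub_unit.
apply: (no_dilation_invariant_arc KY upper_sub Y_neq) => m m_gt0.
by apply: Y_inv; exists m.
Qed.

End Circle.

Theorem corollary4p6 :
  (forall R : realType,
     has_covariant_path_frame_system (@double_cones R) (@poincare R)) /\
  (forall R : realType,
     ~ has_covariant_path_frame_system (@circle_intervals R) (@mobius R)).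
Proof.
split=> R; [exact: double_cones_covariant_frame | exact: circle_intervals_no_covariant_frame].
Qed.
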